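(* Let $A$ be a unital power-associative algebra over a field of characteristic zero and let $R$ be a Rota–Baxter operator of nonzero weight $\lambda$ on $A$. If $R(1)$ is nilpotent, then $R(1)=0$ and $R$ is splitting.
   Context: A linear operator $R\colon A\to A$ is a Rota–Baxter operator of weight $\lambda$ if $R(x)R(y)=R(R(x)y+xR(y)+\lambda xy)$ for all $x,y\in A$. An algebra is power-associative if every element generates an associative subalgebra. An RB-operator $R$ of weight $\lambda$ is splitting if $A=A_1\oplus A_2$ as vector spaces for subalgebras $A_1,A_2$ and $R(a_1+a_2)=-\lambda a_2$ for $a_1\in A_1$, $a_2\in A_2$. *)

(* Possibly non-associative algebras are modelled as a
   K-module V equipped with a bilinear product [mul]. *)
From HB Require Import structures.
From mathcomp Require Import all_boot all_order all_algebra.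
Set Implicit Arguments. Unset Strict Implicit. Unset Printing Implicit Defensive.
Import Order.TTheory GRing.Theory Num.Theory.
Local Open Scope ring_scope.

Section Defs.
Variables (K : fieldType) (V : lmodType K).

Definition bilinear_op (mul : V -> V -> V) : Prop :=
  (forall x, linear (mul x)) /\ (forall y, linear (fun x => mul x y)).

Definition unit_elem (mul : V -> V -> V) (e : V) : Prop :=
  forall x, mul e x = x /\ mul x e = x.

Definition is_subalgebra (mul : V -> V -> V) (P : V -> Prop) : Prop :=
  [/\ P 0,
      (forall (a : K) u v, P u -> P v -> P (a *: u + v)) &
      (forall u v, P u -> P v -> P (mul u v))].

Definition gen_subalg (mul : V -> V -> V) (x z : V) : Prop :=
  forall P, is_subalgebra mul P -> P x -> P z.

Definition power_associative (mul : V -> V -> V) : Prop :=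
  forall x a b c, gen_subalg mul x a -> gen_subalg mul x b -> gen_subalg mul x c ->
    mul (mul a b) c = mul a (mul b c).

Fixpoint npow (mul : V -> V -> V) (e x : V) (n : nat) : V :=
  match n with 0%N => e | n'.+1 => mul x (npow mul e x n') end.

Definition nilpotent_elem (mul : V -> V -> V) (e x : V) : Prop :=
  exists n : nat, npow mul e x n = 0.

Definition rota_baxter (mul : V -> V -> V) (lam : K) (R : V -> V) : Prop :=
  forall x y, mul (R x) (R y) = R (mul (R x) y + mul x (R y) + lam *: mul x y).

Definition splitting (mul : V -> V -> V) (lam : K) (R : V -> V) : Prop :=
  exists (A1 A2 : V -> Prop),
    [/\ is_subalgebra mul A1, is_subalgebra mul A2,
        (forall v, exists a1 a2, [/\ A1 a1, A2 a2 & v = a1 + a2]),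
        (forall v, A1 v -> A2 v -> v = 0) &
        (forall a1 a2, A1 a1 -> A2 a2 -> R (a1 + a2) = - lam *: a2)].
End Defs.

From HB Require Import structures.
From mathcomp Require Import all_boot all_order all_algebra.
Set Implicit Arguments.
Unset Strict Implicit.
Unset Printing Implicit Defensive.
Import Order.TTheory GRing.Theory Num.Theory.
Local Open Scope ring_scope.

(* Write [r = R 1] and [s = r + lam 1].  The Rota-Baxter identity at [(1, z)]
   gives [R (r z + R z + lam z) = r R z], whence [R (s^n) = R (r^n) + lam r^n]:
   so [R] kills [s^n] once [r^n = 0].  Left multiplication by [r] is [L_s - lam]
   and [(L_s - lam)^M 1 = 0] with [lam != 0], so [1] is a combination of high
   powers of [s] and [R 1 = 0].  The identity at [(x, 1)] then reads
   [R (R x) = - lam R x], and [V = ker R (+) im R] is the splitting. *)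

Lemma iter_fix_from {T : Type} {f : T -> T} {z v : T} {m n : nat} :
  f z = z -> iter m f v = z -> (m <= n)%N -> iter n f v = z.
Proof. by move=> fz vz /subnK <-; rewrite iterD vz iter_fix. Qed.

Section ShiftedIteration.
Variables (K : fieldType) (V W : lmodType K) (T : V -> V) (lam : K).
Variable phi : {linear V -> W}.
Hypotheses (T_lin : linear T) (lam_neq0 : lam != 0).

HB.instance Definition _ := GRing.isLinear.Build K V V *:%R T T_lin.

Let S v := T v - lam *: v.

Lemma phi_iter_shift k u :
  phi (iter k T (S u)) = phi (iter k.+1 T u) - lam *: phi (iter k T u).
Proof.
suff -> : iter k T (S u) = iter k.+1 T u - lam *: iter k T u.
  by rewrite linearB linearZ.
by elim: k => //= k ->; rewrite linearB linearZ.
Qed.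

Variables (N : nat) (v : V).
Hypothesis phi_tail : forall k, (N < k)%N -> phi (iter k T v) = 0.

Lemma phi_tail_shift j k : (N < k)%N -> phi (iter k T (iter j S v)) = 0.
Proof.
elim: j k => [|j IH] k ltNk; first exact: phi_tail.
by rewrite /= phi_iter_shift !IH ?scaler0 ?subr0 // (ltn_trans ltNk).
Qed.

(* Since lam != 0, [phi (T^k u) = lam^-1 phi (T^k.+1 u)] when [phi] kills every
   [T^k (S u)], so vanishing propagates down from the tail. *)
Lemma phi_iter_eq0_shift u :
  (forall k, (N < k)%N -> phi (iter k T u) = 0) ->
  (forall k, phi (iter k T (S u)) = 0) ->
  forall k, phi (iter k T u) = 0.
Proof.
move=> tail next; suff Hm m k : (N < k + m)%N -> phi (iter k T u) = 0.
  by move=> k; apply: (Hm N.+1); rewrite ltn_addl.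
elim: m k => [|m IH] k ltN; first by apply: tail; rewrite addn0 in ltN.
have := next k; rewrite phi_iter_shift (IH k.+1) ?addSnnS // sub0r.
by move/eqP; rewrite oppr_eq0 scaler_eq0 (negbTE lam_neq0) => /eqP.
Qed.

Lemma phi_eq0_of_shift_nilpotent M : iter M S v = 0 -> phi v = 0.
Proof.
move=> SMv.
suff Hi i j : (M <= j + i)%N -> forall k, phi (iter k T (iter j S v)) = 0.
  exact: (Hi M 0%N (leqnn M) 0%N).
elim: i j => [|i IH] j leM k.
  rewrite addn0 in leM.
  rewrite (iter_fix_from _ SMv leM) ?iter_fix ?linear0 //.
  by rewrite /S linear0 scaler0 subr0.
apply: phi_iter_eq0_shift; first exact: phi_tail_shift.
by move=> k'; apply: (IH j.+1); rewrite addSnnS.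
Qed.

End ShiftedIteration.

Section BilinearProduct.
Variables (K : fieldType) (V : lmodType K) (mul : V -> V -> V).
Hypothesis mul_bilin : bilinear_op mul.

Lemma mulvDr x u v : mul x (u + v) = mul x u + mul x v.
Proof. by have := mul_bilin.1 x 1 u v; rewrite !scale1r. Qed.

Lemma mulvDl y u v : mul (u + v) y = mul u y + mul v y.
Proof. by have := mul_bilin.2 y 1 u v; rewrite !scale1r. Qed.

Lemma mulv0 x : mul x 0 = 0.
Proof. by apply: (addrI (mul x 0)); rewrite -mulvDr !addr0. Qed.

Lemma mul0v y : mul 0 y = 0.
Proof. by apply: (addrI (mul 0 y)); rewrite -mulvDl !addr0. Qed.

Lemma mulvZr x a u : mul x (a *: u) = a *: mul x u.
Proof. by have := mul_bilin.1 x a u 0; rewrite !addr0 mulv0 addr0. Qed.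

Lemma mulvZl y a u : mul (a *: u) y = a *: mul u y.
Proof. by have := mul_bilin.2 y a u 0; rewrite !addr0 mul0v addr0. Qed.

End BilinearProduct.

Lemma npow_iter (K : fieldType) (V : lmodType K) (mul : V -> V -> V) e x n :
  npow mul e x n = iter n (mul x) e.
Proof. by elim: n => //= n ->. Qed.

Section RotaBaxter.
Variables (K : fieldType) (V : lmodType K) (mul : V -> V -> V).
Variables (R : {linear V -> V}) (lam : K).
Hypotheses (mul_bilin : bilinear_op mul) (R_rb : rota_baxter mul lam R).

Lemma rota_baxter_splitting :
  lam != 0 -> (forall x, R (R x) = - lam *: R x) -> splitting mul lam R.
Proof.
move=> lam_neq0 RR.
have kerRM u v : R u = 0 -> R v = 0 -> R (mul u v) = 0.
  move=> Ru Rv; have := R_rb u v.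
  rewrite Ru Rv (mul0v mul_bilin) (mulv0 mul_bilin) (mul0v mul_bilin).
  rewrite !add0r linearZ /= => /esym/eqP.
  by rewrite scaler_eq0 (negbTE lam_neq0) => /eqP.
exists (fun v => R v = 0), (fun v => exists w, v = R w); split.
- split; first exact: linear0.
    by move=> a u v Ru Rv; rewrite linearP /= Ru Rv scaler0 addr0.
  exact: kerRM.
- split; first by exists 0; rewrite linear0.
    by move=> a x y [u ->] [v ->]; exists (a *: u + v); rewrite linearP.
  move=> x y [u ->] [v ->].
  by exists (mul (R u) v + mul u (R v) + lam *: mul u v).
- move=> v; exists (v + lam^-1 *: R v), (- (lam^-1 *: R v)); split.
  + by rewrite linearD linearZ /= RR scalerA mulrN mulVf // scaleN1r subrr.
  + by exists (- (lam^-1 *: v)); rewrite -linearZ -linearN.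
  + by rewrite -addrA subrr addr0.
- move=> x Rx [w Ew]; move: Rx; rewrite Ew RR => /eqP.
  by rewrite scaler_eq0 oppr_eq0 (negbTE lam_neq0) => /eqP.
- by move=> a1 a2 Ra1 [w ->]; rewrite linearD /= Ra1 add0r RR.
Qed.

Variable e : V.
Hypothesis e_unit : unit_elem mul e.

Let mul1v x : mul e x = x. Proof. by case: (e_unit x). Qed.
Let mulv1 x : mul x e = x. Proof. by case: (e_unit x). Qed.

Lemma rota_baxter_RR : R e = 0 -> forall x, R (R x) = - lam *: R x.
Proof.
move=> Re0 x; have := R_rb x e.
rewrite Re0 !(mulv0 mul_bilin) addr0 !mulv1 linearD linearZ /= => /esym/eqP.
by rewrite addr_eq0 => /eqP ->; rewrite scaleNr.
Qed.

Let s := R e + lam *: e.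

Lemma mul_Re_shift u : mul (R e) u = mul s u - lam *: u.
Proof. by rewrite (mulvDl mul_bilin) (mulvZl mul_bilin) mul1v addrK. Qed.

Let rb_step z := mul (R e) z + R z + lam *: z.

Lemma R_rb_step z : R (rb_step z) = mul (R e) (R z).
Proof. by rewrite R_rb !mul1v. Qed.

Lemma R_rb_step_shift z :
  R (rb_step z) + lam *: rb_step z = mul s (R z + lam *: z).
Proof.
rewrite R_rb_step /rb_step !mul_Re_shift (mulvDr mul_bilin) (mulvZr mul_bilin).
by rewrite !scalerDr scalerN (addrAC (lam *: _)) subrK addrACA addNr addr0.
Qed.

(* [rb_step^n e] is a common preimage: [R] maps it to [(R e)^(n+1)], and
   [R + lam] maps it to [s^(n+1)]. *)
Lemma R_npow_shift n :
  R (npow mul e s n.+1) =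
    R (npow mul e (R e) n.+1) + lam *: npow mul e (R e) n.+1.
Proof.
suff /(_ n) [Rz <-] : forall m, R (iter m rb_step e) = npow mul e (R e) m.+1 /\
    R (iter m rb_step e) + lam *: iter m rb_step e = npow mul e s m.+1.
  by rewrite linearD linearZ /= Rz.
elim=> [|m [IH1 IH2]]; first by rewrite /= !mulv1.
by rewrite iterS R_rb_step_shift R_rb_step IH2 IH1.
Qed.

End RotaBaxter.

Theorem lemma3 (K : fieldType) (V : lmodType K) (mul : V -> V -> V) (e : V)
  (R : {linear V -> V}) (lam : K) :
  [pchar K] =i pred0 ->
  bilinear_op mul -> unit_elem mul e -> power_associative mul ->
  lam != 0 -> rota_baxter mul lam R ->
  nilpotent_elem mul e (R e) ->
  R e = 0 /\ splitting mul lam R.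
Proof.
move=> _ mul_bilin e_unit _ lam_neq0 R_rb [M ReM].
have Re_pow_eq0 n : (M <= n)%N -> npow mul e (R e) n = 0.
  rewrite npow_iter; apply: iter_fix_from; first exact: (mulv0 mul_bilin).
  by rewrite -npow_iter.
have Re0 : R e = 0.
  pose s := R e + lam *: e.
  have shift_nil : iter M (fun v => mul s v - lam *: v) e = 0.
    by rewrite -(eq_iter (mul_Re_shift R lam mul_bilin e_unit)) -npow_iter.
  apply: (phi_eq0_of_shift_nilpotent (mul_bilin.1 s) lam_neq0 (N := M)
           _ shift_nil).
  case=> // n ltMn; rewrite -npow_iter (R_npow_shift mul_bilin R_rb e_unit).
  by rewrite Re_pow_eq0 ?(ltnW ltMn) // raddf0 scaler0 addr0.
split=> //; apply: (rota_baxter_splitting mul_bilin R_rb lam_neq0).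
exact: (rota_baxter_RR mul_bilin R_rb e_unit Re0).
Qed.
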